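(* Let $M=\mathrm{Mon}\langle\Sigma\mid R\rangle$ be a finitely presented monoid and $\mathfrak{R}$ a complete rewriting system for $M$. Let $u,v\in\Sigma^*$. If there exists a word $z$ such that $u\sim z$ and $v\sim z$, then $u\equiv_M v$.
   Context: $=_M$ is equality in $M$. A rewriting system is a set of rules $l\to r$ ($l,r\in\Sigma^*$); $plq\to prq$ is one rewriting step; $\mathfrak{R}$ is complete for $M$ if terminating, confluent, and its generated congruence on $\Sigma^*$ is $=_M$. $u\rightsquigarrow v$ means some cyclic conjugate $\tilde u$ of $u$ in $\Sigma^*$ (possibly $u$) satisfies $\tilde u\to v$; $\rightsquigarrow^*$ is its reflexive–transitive closure. For words $u,v$, $u\sim v$ means $u\rightsquigarrow^* v$ and $v\rightsquigarrow^* u$. $u\equiv_M v$ means there exist $x,y\in\Sigma^*$ with $ux=_M xv$ and $yu=_M vy$. *)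

From mathcomp Require Import all_boot.
From Stdlib Require Import Relations.
Set Implicit Arguments. Unset Strict Implicit. Unset Printing Implicit Defensive.

Definition rstep (Sigma : Type) (rules : seq Sigma -> seq Sigma -> Prop)
  (w w' : seq Sigma) : Prop :=
  exists p l r q, rules l r /\ w = p ++ l ++ q /\ w' = p ++ r ++ q.

Definition rsteps (Sigma : Type) rules := clos_refl_trans (seq Sigma) (@rstep Sigma rules).

Definition rcong (Sigma : Type) rules := clos_refl_sym_trans (seq Sigma) (@rstep Sigma rules).

Definition rules_of (Sigma : eqType) (R : seq (seq Sigma * seq Sigma))
  (l r : seq Sigma) : Prop := (l, r) \in R.

Definition eqM (Sigma : eqType) (R : seq (seq Sigma * seq Sigma)) (a b : seq Sigma) : Prop :=
  rcong (rules_of R) a b.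

Definition terminating (Sigma : Type) rules : Prop :=
  well_founded (fun a b : seq Sigma => @rstep Sigma rules b a).

Definition confluent (Sigma : Type) rules : Prop :=
  forall w a b : seq Sigma, rsteps rules w a -> rsteps rules w b ->
    exists c, rsteps rules a c /\ rsteps rules b c.

Definition complete_for (Sigma : eqType) (rules : seq Sigma -> seq Sigma -> Prop)
  (R : seq (seq Sigma * seq Sigma)) : Prop :=
  terminating rules /\ confluent rules /\
  (forall a b, rcong rules a b <-> eqM R a b).

Definition cstep (Sigma : Type) rules (u v : seq Sigma) : Prop :=
  exists s t, u = s ++ t /\ rstep rules (t ++ s) v.

Definition csteps (Sigma : Type) rules := clos_refl_trans (seq Sigma) (@cstep Sigma rules).

Definition csim (Sigma : Type) rules (u v : seq Sigma) : Prop :=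
  csteps rules u v /\ csteps rules v u.

Definition conjM (Sigma : eqType) (R : seq (seq Sigma * seq Sigma)) (u v : seq Sigma) : Prop :=
  exists x y, eqM R (u ++ x) (x ++ v) /\ eqM R (y ++ u) (v ++ y).

From mathcomp Require Import all_boot.
From Stdlib Require Import Relations.

Set Implicit Arguments.
Unset Strict Implicit.
Unset Printing Implicit Defensive.

(* Write [u ≈ v] for [u ++ x =_M x ++ v /\ y ++ u =_M v ++ y] for some [x, y].
   It is an equivalence (transitivity concatenates the witnesses).  A cyclic
   rewriting step [s ++ t ~> v] is a cyclic shift [s ++ t ≈ t ++ s] (take
   [x = s], [y = t]; both sides are then equal words) followed by a rewriting
   step, which is an equality in [M] (take [x = y = []]).  Hence [u ~>* z] and
   [v ~>* z] give [u ≈ z ≈ v]; of completeness only [rcong rules = eqM R] is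
   needed. *)

Section CyclicConjugacy.
Variables (Sigma : Type) (rules : seq Sigma -> seq Sigma -> Prop).

Lemma rstep_cat p q a b :
  rstep rules a b -> rstep rules (p ++ a ++ q) (p ++ b ++ q).
Proof.
move=> [p' [l [r [q' [lr [-> ->]]]]]].
by exists (p ++ p'), l, r, (q' ++ q); rewrite !catA.
Qed.

Lemma rcong_cat p q a b :
  rcong rules a b -> rcong rules (p ++ a ++ q) (p ++ b ++ q).
Proof.
elim=> [x y xy | x | x y _ yx | x y z _ xy _ yz].
- by apply: rst_step; apply: rstep_cat.
- exact: rst_refl.
- exact: rst_sym.
- exact: rst_trans xy yz.
Qed.

Lemma rcong_catr q a b : rcong rules a b -> rcong rules (a ++ q) (b ++ q).
Proof. exact: (@rcong_cat [::] q). Qed.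

Lemma rcong_catl p a b : rcong rules a b -> rcong rules (p ++ a) (p ++ b).
Proof. by move=> ab; have := @rcong_cat p [::] a b ab; rewrite !cats0. Qed.

Definition rconj (u v : seq Sigma) : Prop :=
  exists x y, rcong rules (u ++ x) (x ++ v) /\ rcong rules (y ++ u) (v ++ y).

Lemma rconj_refl u : rconj u u.
Proof. by exists [::], [::]; rewrite cats0; split; apply: rst_refl. Qed.

Lemma rconj_sym u v : rconj u v -> rconj v u.
Proof. by move=> [x [y [uxv yuv]]]; exists y, x; split; apply: rst_sym. Qed.

Lemma rconj_trans u v w : rconj u v -> rconj v w -> rconj u w.
Proof.
move=> [x1 [y1 [uv1 uv2]]] [x2 [y2 [vw1 vw2]]].
exists (x1 ++ x2), (y2 ++ y1); split.
- apply: (@rst_trans _ _ _ (x1 ++ v ++ x2)).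
  + by have := rcong_catr x2 uv1; rewrite -!catA.
  + by have := rcong_catl x1 vw1; rewrite !catA.
- apply: (@rst_trans _ _ _ (y2 ++ v ++ y1)).
  + by have := rcong_catl y2 uv2; rewrite !catA.
  + by have := rcong_catr y1 vw2; rewrite -!catA.
Qed.

Lemma rconj_rot s t : rconj (s ++ t) (t ++ s).
Proof. by exists s, t; rewrite -!catA; split; apply: rst_refl. Qed.

Lemma rstep_rconj u v : rstep rules u v -> rconj u v.
Proof.
by move=> uv; exists [::], [::]; rewrite !cats0; split; exact: rst_step.
Qed.

Lemma cstep_rconj u v : cstep rules u v -> rconj u v.
Proof.
move=> [s [t [-> tsv]]].
exact: rconj_trans (rconj_rot s t) (rstep_rconj tsv).
Qed.

Lemma csteps_rconj u v : csteps rules u v -> rconj u v.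
Proof.
elim=> [x y | x | x y z _ xy _ yz].
- exact: cstep_rconj.
- exact: rconj_refl.
- exact: rconj_trans xy yz.
Qed.

End CyclicConjugacy.

Theorem proposition7p3 (Sigma : finType) (R : seq (seq Sigma * seq Sigma))
  (rules : seq Sigma -> seq Sigma -> Prop) :
  complete_for rules R ->
  forall u v : seq Sigma,
  (exists z, csim rules u z /\ csim rules v z) ->
  conjM R u v.
Proof.
move=> [_ [_ rcong_eqM]] u v [z [[uz _] [vz _]]].
have [x [y [uxv yuv]]] :=
  rconj_trans (csteps_rconj uz) (rconj_sym (csteps_rconj vz)).
by exists x, y; split; apply/rcong_eqM.
Qed.
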